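(* Let $D\ge 1$. If a complex number $\alpha$ can be computed by a root computation tree of degree $D$, then the field extension degree $[\mathbf{Q}(\alpha):\mathbf{Q}]$ is $D$-smooth, i.e., it has no prime factor greater than $D$. In particular, if $\alpha$ can be computed by a quadratic computation tree, then $[\mathbf{Q}(\alpha):\mathbf{Q}]$ is a power of two.
   Context: An algebraic computation tree is a rooted tree whose computation nodes compute a value as the sum, difference, product or quotient of integer constants and values computed at ancestor nodes, and whose decision nodes test whether a computed value is greater than zero and branch. A root computation tree additionally allows computing a complex root of a univariate polynomial whose coefficients are integers or previously computed values, and complex conjugation; its degree is the maximum degree of any polynomial used. A quadratic computation tree is an algebraic computation tree additionally allowing square roots and complex conjugation. A value is computed by a tree if it is computed at some node. *)

(* Complex numbers are modelled by algC (algebraic complex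
   numbers): every value computed by these trees is algebraic. *)
From HB Require Import structures.
From mathcomp Require Import all_boot all_order all_algebra all_field.
Set Implicit Arguments. Unset Strict Implicit. Unset Printing Implicit Defensive.
Import Order.TTheory GRing.Theory Num.Theory.
Local Open Scope ring_scope.

(* An operand: an integer constant, or the value computed at the i-th
   ancestor computation node (counted from the root, starting at 0). *)
Inductive operand :=
| OConst of int
| OVal of nat.

Inductive instr :=
| IAdd of operand & operand
| ISub of operand & operand
| IMul of operand & operand
| IDiv of operand & operand
| IRoot of seq operand      (* a root of sum_i c_i X^i, coefficients c_0..c_n *)
| IConj of operand
| ISqrt of operand.

(* Computation trees: leaves, computation nodes (one child),
   decision nodes (test "value of ancestor i > 0", two children). *)
Inductive ctree :=
| Leaf
| Comp of instr & ctree
| Dec of nat & ctree & ctree.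

Definition lookup (env : seq algC) (i : nat) : option algC :=
  if (i < size env)%N then Some (nth 0 env i) else None.

Definition eval_op (env : seq algC) (o : operand) : option algC :=
  match o with
  | OConst z => Some (z%:~R)
  | OVal i => lookup env i
  end.

(* Division by zero, roots of the zero polynomial, and references to
   non-existing ancestors yield nothing.  Root and square-root nodes may
   return any root. *)
Definition step (env : seq algC) (op : instr) (v : algC) : Prop :=
  match op with
  | IAdd a b => exists x y, eval_op env a = Some x /\ eval_op env b = Some y /\ v = x + y
  | ISub a b => exists x y, eval_op env a = Some x /\ eval_op env b = Some y /\ v = x - y
  | IMul a b => exists x y, eval_op env a = Some x /\ eval_op env b = Some y /\ v = x * y
  | IDiv a b => exists x y, eval_op env a = Some x /\ eval_op env b = Some y /\
                            y != 0 /\ v = x / y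
  | IRoot cs => exists c : seq algC, map (eval_op env) cs = map Some c /\
                  Poly c != 0 /\ root (Poly c) v
  | IConj a => exists x, eval_op env a = Some x /\ v = x^*
  | ISqrt a => exists x, eval_op env a = Some x /\ v ^+ 2 = x
  end.

(* [computes_from env t x]: starting with ancestor values [env], the
   (sub)tree [t] computes [x] at some node reached by the computation. *)
Fixpoint computes_from (env : seq algC) (t : ctree) (x : algC) : Prop :=
  match t with
  | Leaf => False
  | Comp op t' => exists v, step env op v /\ (x = v \/ computes_from (rcons env v) t' x)
  | Dec i t1 t2 => exists v, lookup env i = Some v /\
                    (if 0 < v then computes_from env t1 x else computes_from env t2 x)
  end.

Definition computes (t : ctree) (x : algC) : Prop := computes_from [::] t x.

(* Root computation tree of degree (at most) D: arithmetic, conjugation and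
   roots of polynomials of degree <= D (at most D+1 coefficients). *)
Fixpoint root_tree (D : nat) (t : ctree) : bool :=
  match t with
  | Leaf => true
  | Comp (ISqrt _) _ => false
  | Comp (IRoot cs) t' => (size cs <= D.+1)%N && root_tree D t'
  | Comp _ t' => root_tree D t'
  | Dec _ t1 t2 => root_tree D t1 && root_tree D t2
  end.

Fixpoint quad_tree (t : ctree) : bool :=
  match t with
  | Leaf => true
  | Comp (IRoot _) _ => false
  | Comp _ t' => quad_tree t'
  | Dec _ t1 t2 => quad_tree t1 && quad_tree t2
  end.

Definition degQ (a : algC) : nat := (size (minCpoly a)).-1.

(** Every value computed along a branch of the tree, together with its complex
    conjugate, lies in one number field [Qs].  Following the branch, each new
    value [v] is a root of a polynomial of degree at most [B] whose
    coefficients are earlier values or their conjugates (the conjugate of a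
    root of [p] is a root of the conjugate of [p]), so adjoining [v] and then
    [v^*] multiplies the degree of the current subfield of [Qs] by two factors
    at most [B].  The field generated by the branch therefore has [B]-smooth
    degree over [Q], and [[Q(a):Q]] divides it.  Square roots are roots of
    degree-2 polynomials, so quadratic trees give [2]-smooth degrees, i.e.
    powers of two. *)

From mathcomp Require Import all_boot all_order all_algebra all_field.
From mathcomp Require Import ring.
Import GRing.Theory Num.Theory.
Local Open Scope ring_scope.
Set Implicit Arguments. Unset Strict Implicit.

Definition smooth (B n : nat) := forall p, prime p -> (p %| n)%N -> (p <= B)%N.

Lemma smooth1 B : smooth B 1.
Proof. by move=> p p_pr; rewrite dvdn1 => /eqP p1; rewrite p1 in p_pr. Qed.

Lemma smooth_dvd B m n : (m %| n)%N -> smooth B n -> smooth B m.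
Proof. by move=> m_n sm p p_pr p_m; apply: sm (dvdn_trans p_m m_n). Qed.

Lemma smoothM B k m : (0 < k <= B)%N -> smooth B m -> smooth B (k * m).
Proof.
move=> /andP[k_gt0 k_le] sm p p_pr; rewrite Euclid_dvdM // => /orP[p_k|]; last exact: sm.
exact: leq_trans (dvdn_leq k_gt0 p_k) k_le.
Qed.

Lemma smooth2_pow2 n : (0 < n)%N -> smooth 2 n -> n = (2 ^ logn 2 n)%N.
Proof.
move=> n_gt0 sm; rewrite -p_part part_pnat_id //; apply/pnatP => // p p_pr p_n.
by rewrite inE eqn_leq sm // prime_gt1.
Qed.

Definition bounded_instr (B : nat) (op : instr) : bool :=
  match op with
  | IRoot cs => (size cs <= B.+1)%N
  | ISqrt _ => (2 <= B)%N
  | _ => true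
  end.

Fixpoint bounded_tree (B : nat) (t : ctree) : bool :=
  match t with
  | Leaf => true
  | Comp op t' => bounded_instr B op && bounded_tree B t'
  | Dec _ t1 t2 => bounded_tree B t1 && bounded_tree B t2
  end.

Lemma root_tree_bounded D t : root_tree D t -> bounded_tree D t.
Proof.
elim: t => //= [op t IH | i t1 IH1 t2 IH2]; last by case/andP=> /IH1 -> /IH2.
case: op => [??|??|??|??|cs|?|?] //=; try exact: IH.
by case/andP=> -> /IH.
Qed.

Lemma quad_tree_bounded t : quad_tree t -> bounded_tree 2 t.
Proof.
elim: t => //= [op t IH | i t1 IH1 t2 IH2]; last by case/andP=> /IH1 -> /IH2.
by case: op => //= *; apply: IH.
Qed.

Inductive reachable (B : nat) : seq algC -> Prop :=
| reachable_nil : reachable B [::]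
| reachable_rcons env op v :
    reachable B env -> bounded_instr B op -> step env op v -> reachable B (rcons env v).

Lemma computes_from_reachable B t env a :
  bounded_tree B t -> reachable B env -> computes_from env t a ->
  exists2 env', reachable B env' & a \in env'.
Proof.
elim: t env => [|op t IH|i t1 IH1 t2 IH2] env //=.
  move=> /andP[op_ok t_ok] r_env [v [v_step [->|a_t]]].
    exists (rcons env v); first exact: reachable_rcons v_step.
    by rewrite mem_rcons mem_head.
  exact: IH t_ok (reachable_rcons r_env op_ok v_step) a_t.
by move=> /andP[t1_ok t2_ok] r_env [v [_]]; case: ifP => _; [apply: IH1 | apply: IH2].
Qed.

Lemma mem_map_Some (T : Type) (U : eqType) (f : T -> option U) s c x :
  map f s = map Some c -> x \in c -> exists o, f o = Some x.
Proof.
elim: s c => [|o s IH] [|y c] //= [fo_y s_c]; rewrite inE => /orP[/eqP->|x_c].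
  by exists o.
exact: IH s_c x_c.
Qed.

Section NumberField.
Variables (Qs : fieldExtType rat) (QsC : {rmorphism Qs -> algC}).

Definition in_image (E : {vspace Qs}) (x : algC) := exists2 y, y \in E & QsC y = x.

Lemma in_imageS (E F : {vspace Qs}) x : (E <= F)%VS -> in_image E x -> in_image F x.
Proof. by move=> /subvP sEF [y /sEF yF <-]; exists y. Qed.

Section SubfieldImage.
Variable E : {subfield Qs}.

Lemma in_image_int (z : int) : in_image E z%:~R.
Proof. by exists z%:~R; rewrite ?rpred_int ?rmorph_int. Qed.

Lemma in_imageD x y : in_image E x -> in_image E y -> in_image E (x + y).
Proof. by move=> [a aE <-] [b bE <-]; exists (a + b); rewrite ?rpredD ?rmorphD. Qed.

Lemma in_imageN x : in_image E x -> in_image E (- x).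
Proof. by move=> [a aE <-]; exists (- a); rewrite ?rpredN ?rmorphN. Qed.

Lemma in_imageM x y : in_image E x -> in_image E y -> in_image E (x * y).
Proof. by move=> [a aE <-] [b bE <-]; exists (a * b); rewrite ?rpredM ?rmorphM. Qed.

Lemma in_imageV x : in_image E x -> in_image E x^-1.
Proof. by move=> [a aE <-]; exists a^-1; rewrite ?rpredV ?fmorphV. Qed.

End SubfieldImage.

Definition algebraic_le (E : {vspace Qs}) (B : nat) (w : algC) :=
  exists c : seq algC, [/\ {in c, forall x, in_image E x}, Poly c != 0,
                          root (Poly c) w & (size c <= B.+1)%N].

Lemma algebraic_leS (E F : {vspace Qs}) B w :
  (E <= F)%VS -> algebraic_le E B w -> algebraic_le F B w.
Proof.
move=> sEF [c [c_E c_nz c_w c_sz]]; exists c; split=> // x /c_E.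
exact: in_imageS.
Qed.

Lemma algebraic_le_conj (E : {vspace Qs}) B w (c : seq algC) :
  {in c, forall x, in_image E x^*} -> Poly c != 0 -> root (Poly c) w ->
  (size c <= B.+1)%N -> algebraic_le E B w^*.
Proof.
move=> c_E c_nz c_w c_sz; exists (map Num.conj c); split.
- by move=> _ /mapP[x /c_E xE ->].
- by rewrite -map_Poly map_poly_eq0.
- by rewrite -map_Poly fmorph_root.
- by rewrite size_map.
Qed.

Lemma algebraic_le_mem (E : {subfield Qs}) B w :
  (1 <= B)%N -> in_image E w -> algebraic_le E B w.
Proof.
move=> B_gt0 wE; exists [:: - w; 1]; split=> //.
- move=> x; rewrite !inE => /orP[]/eqP->; first exact: in_imageN.
  exact: (in_image_int E 1).
- apply/eqP => /(congr1 (fun p : {poly algC} => p`_1)).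
  by rewrite coef_Poly coef0 /=; apply/eqP/oner_neq0.
- by rewrite /root horner_Poly /= mul0r add0r mul1r addrN.
Qed.

Lemma algebraic_le_sqrt (E : {subfield Qs}) B x w :
  (2 <= B)%N -> in_image E x -> w ^+ 2 = x -> algebraic_le E B w.
Proof.
move=> B_ge2 xE wx; exists [:: - x; 0; 1]; split=> //.
- move=> z; rewrite !inE => /or3P[]/eqP->; first exact: in_imageN.
    exact: (in_image_int E 0).
  exact: (in_image_int E 1).
- apply/eqP => /(congr1 (fun p : {poly algC} => p`_2)).
  by rewrite coef_Poly coef0 /=; apply/eqP/oner_neq0.
- by rewrite /root horner_Poly /= -wx; apply/eqP; ring.
Qed.

Lemma adjoin_degree_le (E : {subfield Qs}) B y :
  algebraic_le E B (QsC y) -> (adjoin_degree E y <= B)%N.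
Proof.
case=> c [c_E c_nz c_y c_sz].
have [d d_E d_c] : exists2 d : seq Qs, all (mem E) d & map QsC d = c.
  elim: c c_E {c_nz c_y c_sz} => [|x c IH] c_E; first by exists [::].
  have [y' y'E <-] := c_E x (mem_head x c).
  have [d d_E <-] := IH (fun z zc => c_E z (mem_behead (zc : z \in behead (x :: c)))).
  by exists (y' :: d); rewrite //= y'E.
have map_d : map_poly QsC (Poly d) = Poly c by rewrite map_Poly d_c.
have d_nz : Poly d != 0 by rewrite -(map_poly_eq0 QsC) map_d.
have d_y : root (Poly d) y by rewrite -(fmorph_root QsC) map_d.
have d_over : Poly d \is a polyOver E.
  apply/polyOverP => i; rewrite coef_Poly.
  by case: (ltnP i (size d)) => i_d; [apply/(allP d_E)/mem_nth | rewrite nth_default ?rpred0].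
have := dvdp_leq d_nz (minPoly_dvdp d_over d_y).
rewrite size_minPoly => deg_le; rewrite -ltnS (leq_trans deg_le) //.
by rewrite (leq_trans (size_Poly _)) // -(size_map QsC) d_c.
Qed.

Definition conj_in_image (E : {vspace Qs}) (env : seq algC) :=
  {in env, forall z, in_image E z /\ in_image E z^*}.

Lemma eval_op_in_image (E : {subfield Qs}) env o x :
  conj_in_image E env -> eval_op env o = Some x -> in_image E x /\ in_image E x^*.
Proof.
move=> envE; case: o => [z [<-]|i] /=.
  by rewrite rmorph_int; split; apply: in_image_int.
by rewrite /lookup; case: ifP => // i_env [<-]; apply/envE/mem_nth.
Qed.

Lemma step_algebraic_le (E : {subfield Qs}) B env op v :
  (1 <= B)%N -> conj_in_image E env -> bounded_instr B op -> step env op v ->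
  algebraic_le E B v /\ algebraic_le E B v^*.
Proof.
move=> B_gt0 envE; have evalE := eval_op_in_image envE.
have mem2 w : in_image E w /\ in_image E w^* -> algebraic_le E B w /\ algebraic_le E B w^*.
  by case=> wE wE'; split; apply: algebraic_le_mem.
case: op => [a b|a b|a b|a b|cs|a|a] /= op_ok.
- case=> x [y [/evalE[xE xE'] [/evalE[yE yE'] ->]]].
  by apply: mem2; rewrite rmorphD; split; apply: in_imageD.
- case=> x [y [/evalE[xE xE'] [/evalE[yE yE'] ->]]].
  by apply: mem2; rewrite rmorphB; split; apply/in_imageD/in_imageN.
- case=> x [y [/evalE[xE xE'] [/evalE[yE yE'] ->]]].
  by apply: mem2; rewrite rmorphM; split; apply: in_imageM.
- case=> x [y [/evalE[xE xE'] [/evalE[yE yE'] [_ ->]]]].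
  by apply: mem2; rewrite fmorph_div; split; apply/in_imageM/in_imageV.
- case=> c [cs_c [c_nz c_v]].
  have c_E : {in c, forall x, in_image E x /\ in_image E x^*}.
    by move=> x /(mem_map_Some cs_c)[o]; apply: evalE.
  have c_sz : (size c <= B.+1)%N by rewrite -(size_map Some) -cs_c size_map.
  split; last by apply: algebraic_le_conj c_sz => // x /c_E[].
  by exists c; split=> // x /c_E[].
- by case=> x [/evalE[xE xE'] ->]; apply: mem2; rewrite conjCK.
- case=> x [/evalE[xE xE'] vx]; split; first exact: algebraic_le_sqrt vx.
  by apply: algebraic_le_sqrt xE' _ => //; rewrite -rmorphXn vx.
Qed.

Lemma reachable_subfield B env :
  (1 <= B)%N -> reachable B env -> conj_in_image fullv env ->
  exists2 E : {subfield Qs}, smooth B (\dim E) & conj_in_image E env.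
Proof.
move=> B_gt0; elim=> {env} [|env op v r_env IH op_ok v_step] envQs.
  by exists 1%AS => //; rewrite dimv1; apply: smooth1.
have [E smE envE] : exists2 E : {subfield Qs}, smooth B (\dim E) & conj_in_image E env.
  by apply: IH => x x_env; apply: envQs; rewrite mem_rcons inE x_env orbT.
have [[y _ yv] [y' _ y'v]] : in_image fullv v /\ in_image fullv v^*.
  by apply: envQs; rewrite mem_rcons mem_head.
have [alg_v alg_v'] := step_algebraic_le B_gt0 envE op_ok v_step.
pose E1 := <<E; y>>%AS; pose E2 := <<E1; y'>>%AS.
have sEE1 : (E <= E1)%VS := subv_adjoin E y.
have sE1E2 : (E1 <= E2)%VS := subv_adjoin E1 y'.
have deg_y : (adjoin_degree E y <= B)%N by apply: adjoin_degree_le; rewrite yv.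
have deg_y' : (adjoin_degree E1 y' <= B)%N.
  by apply: adjoin_degree_le; rewrite y'v; apply: algebraic_leS alg_v'.
exists E2.
  rewrite /E2 dim_Fadjoin /E1 dim_Fadjoin.
  apply: smoothM; first by rewrite deg_y' andbT /adjoin_degree.
  by apply: smoothM; first rewrite deg_y andbT /adjoin_degree.
move=> z; rewrite mem_rcons inE => /orP[/eqP->|z_env].
  split; last by exists y'; rewrite ?memv_adjoin.
  by exists y => //; apply/(subvP sE1E2)/memv_adjoin.
have [zE zE'] := envE z z_env.
by split; apply: in_imageS (subv_trans sEE1 sE1E2) _.
Qed.

Lemma degQ_adjoin_degree y : degQ (QsC y) = adjoin_degree 1%AS y.
Proof.
have map_alg q : map_poly QsC (map_poly (in_alg Qs) q) = map_poly ratr q.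
  by rewrite -map_poly_comp; apply: eq_map_poly => r /=; rewrite alg_num_field fmorph_rat.
have [p [minC_p p_monic] root_p] := minCpolyP (QsC y).
have /polyOver1P[q minP_q] := minPolyOver 1%AS y.
have q_monic : q \is monic by rewrite -(map_monic (in_alg Qs)) -minP_q monic_minPoly.
have root_q : root (map_poly ratr q) (QsC y).
  by rewrite -map_alg -minP_q fmorph_root root_minPoly.
have q_p : (q %| p)%R.
  rewrite -(dvdp_map (in_alg Qs)) -minP_q minPoly_dvdp //; first by apply/polyOver1P; exists p.
  by rewrite -(fmorph_root QsC) map_alg -minC_p root_minCpoly.
have /eqP p_q : p == q.
  by rewrite -eqp_monic // /eqp q_p -root_p root_q.
by rewrite /degQ minC_p size_map_poly p_q -(size_map_poly (in_alg Qs)) -minP_q size_minPoly.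
Qed.

End NumberField.

Lemma computes_smooth B t a :
  (1 <= B)%N -> bounded_tree B t -> computes t a -> smooth B (degQ a).
Proof.
move=> B_gt0 t_ok t_a.
have [env r_env a_env] := computes_from_reachable t_ok (reachable_nil B) t_a.
have [Qs [QsC [s s_env _]]] := num_field_exists (env ++ map Num.conj env).
have envQs : conj_in_image QsC fullv env.
  have inQs w : w \in env ++ map Num.conj env -> in_image QsC fullv w.
    by rewrite -s_env => /mapP[y _ ->]; exists y; rewrite ?memvf.
  by move=> x x_env; split; apply: inQs; rewrite mem_cat ?x_env ?map_f ?orbT.
have [E smE envE] := reachable_subfield B_gt0 r_env envQs.
have [[y yE <-] _] := envE a a_env.
rewrite degQ_adjoin_degree; apply: smooth_dvd smE.
have := field_dimS (etrans (sub_adjoin1v y E) yE).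
by rewrite dim_Fadjoin dimv1 muln1.
Qed.

Theorem lemma5 :
  (forall (D : nat) (t : ctree) (a : algC),
      (1 <= D)%N -> root_tree D t -> computes t a ->
      forall p : nat, prime p -> (p %| degQ a)%N -> (p <= D)%N)
  /\
  (forall (t : ctree) (a : algC),
      quad_tree t -> computes t a -> exists k : nat, degQ a = (2 ^ k)%N).
Proof.
split=> [D t a D_gt0 /root_tree_bounded t_ok t_a | t a /quad_tree_bounded t_ok t_a].
  exact: computes_smooth D_gt0 t_ok t_a.
exists (logn 2 (degQ a)); apply: smooth2_pow2; last exact: computes_smooth t_ok t_a.
by rewrite /degQ -subn1 subn_gt0 size_minCpoly.
Qed.
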